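(* For distinct $a,b\in H^2$ and $k\in\mathbb R$ let $S_k(a,b)=\{x\in H^2: d_H(x,a)^2-d_H(x,b)^2=k\}$. For $\mathsf x=(x_1,x_2)$, $\mathsf y=(y_1,y_2)$ in $H^2\times H^2$ with $x_i\ne y_i$ let $E_k(\mathsf x,\mathsf y)=S_k(x_1,y_1)\times S_k(y_2,x_2)$. Let $\mathsf x,\mathsf y,\mathsf z\in H^2\times H^2$ be such that $\mathsf y$ is between $\mathsf x$ and $\mathsf z$. If $E_k(\mathsf x,\mathsf y)\cap E_l(\mathsf y,\mathsf z)\neq\emptyset$ for some $k,l\in\mathbb R$, then $kl>0$.
   Context: For $x,y,z\in H^2$, let $l_1=S_0(x,y)$ and $l_2=S_0(y,z)$ be the equidistant lines; if $l_1,l_2$ are disjoint, the complement of $l_1\cup l_2$ has three components, two half-planes bounded by $l_1$ resp. $l_2$, and a slab bounded by $l_1\cup l_2$. We say $y$ is between $x$ and $z$ if $l_1$ and $l_2$ are disjoint and $y$ lies in the slab. For points of $H^2\times H^2$, $\mathsf y$ is between $\mathsf x$ and $\mathsf z$ if for each $i=1,2$ the $i$-th coordinate $y_i$ is between $x_i$ and $z_i$ in this sense. $d_H$ is the hyperbolic distance. *)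

From Stdlib Require Import Reals.
Open Scope R_scope.

(* The hyperbolic plane H^2, upper half-plane model: points (u,v) with v > 0. *)
Definition H2 : Type := { p : R * R | 0 < snd p }.

Definition arcosh (t : R) : R := ln (t + sqrt (t * t - 1)).

Definition dH (p q : H2) : R :=
  let '(u1, v1) := proj1_sig p in
  let '(u2, v2) := proj1_sig q in
  arcosh (1 + ((u1 - u2) ^ 2 + (v1 - v2) ^ 2) / (2 * v1 * v2)).

Definition S (k : R) (a b : H2) (x : H2) : Prop :=
  dH x a ^ 2 - dH x b ^ 2 = k.

(* Signed "side" function of the equidistant line S_0(a,b):
   its zero set is S_0(a,b), and the two (open) half-planes bounded by
   S_0(a,b) are where it is positive, resp. negative. *)
Definition side (a b : H2) (p : H2) : R := dH p a ^ 2 - dH p b ^ 2.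

(* y is between x and z in H^2: l1 = S_0(x,y), l2 = S_0(y,z) are disjoint and
   y lies in the slab bounded by l1 ∪ l2, i.e. the component of the complement
   of l1 ∪ l2 lying on the same side of l1 as l2 and on the same side of l2 as l1. *)
Definition between (x y z : H2) : Prop :=
  (forall p, ~ (S 0 x y p /\ S 0 y z p)) /\
  (forall q, S 0 y z q -> side x y q * side x y y > 0) /\
  (forall q, S 0 x y q -> side y z q * side y z y > 0).

Definition H2xH2 : Type := (H2 * H2)%type.

Definition betweenP (x y z : H2xH2) : Prop :=
  between (fst x) (fst y) (fst z) /\ between (snd x) (snd y) (snd z).

Definition E (k : R) (x y : H2xH2) (p : H2xH2) : Prop :=
  S k (fst x) (fst y) (fst p) /\ S k (snd y) (snd x) (snd p).

(* If p satisfied side(x,y) p <= 0 <= side(y,z) p, it would lie in the closed region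
   beyond l1 and l2 as seen from y.  Betweenness says this region meets neither l1 nor
   l2, while y lies outside it.  Along the Euclidean segment from p to y the signs of
   both sides are those of explicit polynomials, so the intermediate value theorem
   yields a point of l1 or l2 in the region.  Hence every point is strictly on y's side
   of l1 or of l2; in the two factors of E (where the roles of the points are swapped)
   this gives k > 0 or l < 0, and k < 0 or l > 0. *)

From Stdlib Require Import Reals Lra Psatz.
Open Scope R_scope.

Definition re (p : H2) : R := fst (proj1_sig p).
Definition im (p : H2) : R := snd (proj1_sig p).

Lemma im_gt0 (p : H2) : 0 < im p.
Proof. exact (proj2_sig p). Qed.

Definition cosh_dH (p q : H2) : R :=
  1 + ((re p - re q) ^ 2 + (im p - im q) ^ 2) / (2 * im p * im q).

Lemma dH_arcosh (p q : H2) : dH p q = arcosh (cosh_dH p q).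
Proof. destruct p as [[u1 v1] h1], q as [[u2 v2] h2]; reflexivity. Qed.

Lemma cosh_dH_ge1 (p q : H2) : 1 <= cosh_dH p q.
Proof.
  unfold cosh_dH; pose proof (im_gt0 p); pose proof (im_gt0 q).
  assert (0 <= ((re p - re q) ^ 2 + (im p - im q) ^ 2) / (2 * im p * im q)).
  { apply Rmult_le_pos; [apply Rplus_le_le_0_compat; apply pow2_ge_0 | ].
    left; apply Rinv_0_lt_compat; nra. }
  lra.
Qed.

Lemma arcosh_1 : arcosh 1 = 0.
Proof. unfold arcosh; replace (1 * 1 - 1) with 0 by ring; rewrite sqrt_0, Rplus_0_r; apply ln_1. Qed.

Lemma arcosh_ge0 (t : R) : 1 <= t -> 0 <= arcosh t.
Proof.
  intro Ht; unfold arcosh; rewrite <- ln_1.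
  pose proof (sqrt_pos (t * t - 1)).
  destruct (Rle_lt_or_eq_dec 1 (t + sqrt (t * t - 1))) as [Hlt | Heq]; [lra | | ].
  - left; apply ln_increasing; lra.
  - rewrite <- Heq; lra.
Qed.

Lemma arcosh_lt (s t : R) : 1 <= s -> s < t -> arcosh s < arcosh t.
Proof.
  intros Hs Hst; unfold arcosh; pose proof (sqrt_pos (s * s - 1)).
  assert (sqrt (s * s - 1) <= sqrt (t * t - 1)) by (apply sqrt_le_1_alt; nra).
  apply ln_increasing; lra.
Qed.

Lemma arcosh_sqr_lt (s t : R) : 1 <= s -> s < t -> arcosh s ^ 2 < arcosh t ^ 2.
Proof.
  intros Hs Hst; pose proof (arcosh_ge0 s Hs); pose proof (arcosh_lt s t Hs Hst); nra.
Qed.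

Lemma dH_refl (p : H2) : dH p p = 0.
Proof.
  rewrite dH_arcosh; unfold cosh_dH.
  replace ((re p - re p) ^ 2 + (im p - im p) ^ 2) with 0 by ring.
  unfold Rdiv; rewrite Rmult_0_l, Rplus_0_r; apply arcosh_1.
Qed.

Lemma side_swap (a b p : H2) : side b a p = - side a b p.
Proof. unfold side; ring. Qed.

Lemma side_neg_iff_cosh (a b p : H2) : side a b p < 0 <-> cosh_dH p a < cosh_dH p b.
Proof.
  unfold side; rewrite !dH_arcosh; split; intro H.
  - destruct (Rlt_le_dec (cosh_dH p a) (cosh_dH p b)) as [Hlt | [Hlt | Heq]]; [exact Hlt | | ].
    + pose proof (arcosh_sqr_lt _ _ (cosh_dH_ge1 p b) Hlt); lra.
    + rewrite Heq in H; lra.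
  - pose proof (arcosh_sqr_lt _ _ (cosh_dH_ge1 p a) H); lra.
Qed.

(* A polynomial in (u, v) with the sign of [side a b] at u + i v. *)
Definition bisector (a b : H2) (u v : R) : R :=
  ((u - re a) ^ 2 + (v - im a) ^ 2) / im a - ((u - re b) ^ 2 + (v - im b) ^ 2) / im b.

Lemma bisector_cosh_dH (a b p : H2) :
  bisector a b (re p) (im p) = 2 * im p * (cosh_dH p a - cosh_dH p b).
Proof.
  unfold cosh_dH, bisector.
  pose proof (im_gt0 a); pose proof (im_gt0 b); pose proof (im_gt0 p).
  field; lra.
Qed.

Lemma side_neg_iff (a b p : H2) : side a b p < 0 <-> bisector a b (re p) (im p) < 0.
Proof.
  rewrite side_neg_iff_cosh, bisector_cosh_dH; pose proof (im_gt0 p).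
  split; intro; nra.
Qed.

Lemma bisector_swap (a b : H2) (u v : R) : bisector b a u v = - bisector a b u v.
Proof. unfold bisector; ring. Qed.

Lemma side_pos_iff (a b p : H2) : 0 < side a b p <-> 0 < bisector a b (re p) (im p).
Proof.
  pose proof (side_neg_iff b a p) as H.
  rewrite side_swap, bisector_swap in H; split; intro; apply Ropp_lt_cancel;
    rewrite Ropp_0; apply H; lra.
Qed.

Lemma continuity_Rmin (f g : R -> R) :
  continuity f -> continuity g -> continuity (fun t => Rmin (f t) (g t)).
Proof.
  intros Hf Hg t.
  apply continuity_pt_locally_ext with (fun t => (f t + g t - Rabs (f t - g t)) / 2) 1;
    [lra | | ].
  - intros s _; unfold Rmin; destruct (Rle_dec (f s) (g s)).
    + rewrite Rabs_left1 by lra; field.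
    + rewrite Rabs_right by lra; field.
  - apply continuity_pt_mult; [ | apply continuity_pt_const; intros ? ?; reflexivity].
    apply continuity_pt_minus; [apply continuity_pt_plus; auto | ].
    apply (continuity_comp (fun t => f t - g t) Rabs); [apply continuity_minus; auto | ].
    exact Rcontinuity_abs.
Qed.

Lemma bisector_continuous_segment (a b : H2) (u0 v0 u1 v1 : R) :
  continuity (fun t => bisector a b ((1 - t) * u0 + t * u1) ((1 - t) * v0 + t * v1)).
Proof. unfold bisector; reg. Qed.

Lemma H2_segment (p q : H2) (t : R) : 0 <= t <= 1 ->
  exists w : H2, re w = (1 - t) * re p + t * re q /\ im w = (1 - t) * im p + t * im q.
Proof.
  intro Ht; pose proof (im_gt0 p); pose proof (im_gt0 q).
  assert (Hw : 0 < snd ((1 - t) * re p + t * re q, (1 - t) * im p + t * im q))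
    by (simpl; nra).
  exists (exist (fun w : R * R => 0 < snd w) _ Hw); split; reflexivity.
Qed.

Section Between.

Variables x y z : H2.
Hypothesis Hbetween : between x y z.

Lemma between_region_open (q : H2) :
  side x y q <= 0 -> 0 <= side y z q -> side x y q < 0 /\ 0 < side y z q.
Proof.
  destruct Hbetween as [_ [Hl2 Hl1]]; intros Hxy Hyz; split.
  - destruct Hxy as [Hlt | Heq]; [exact Hlt | exfalso].
    specialize (Hl1 q Heq); unfold side in Hl1 at 2; rewrite dH_refl in Hl1.
    pose proof (pow2_ge_0 (dH y z)); nra.
  - destruct Hyz as [Hlt | Heq]; [exact Hlt | exfalso].
    specialize (Hl2 q (eq_sym Heq)); unfold side in Hl2 at 2; rewrite dH_refl in Hl2.
    pose proof (pow2_ge_0 (dH y x)); nra.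
Qed.

Let gap (u v : R) : R := Rmin (- bisector x y u v) (bisector y z u v).

Lemma gap_pos_of_region (q : H2) :
  side x y q <= 0 -> 0 <= side y z q -> 0 < gap (re q) (im q).
Proof.
  intros Hxy Hyz; destruct (between_region_open q Hxy Hyz) as [Hxy' Hyz'].
  apply side_neg_iff in Hxy'; apply side_pos_iff in Hyz'.
  unfold gap, Rmin; destruct (Rle_dec _ _); lra.
Qed.

Lemma gap_neq0 (q : H2) : gap (re q) (im q) <> 0.
Proof.
  intro H0.
  assert (Hb : bisector x y (re q) (im q) <= 0 /\ 0 <= bisector y z (re q) (im q)).
  { revert H0; unfold gap, Rmin; destruct (Rle_dec _ _); intro; lra. }
  assert (Hxy : side x y q <= 0).
  { apply Rnot_lt_le; intro H; apply side_pos_iff in H; lra. }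
  assert (Hyz : 0 <= side y z q).
  { apply Rnot_lt_le; intro H; apply side_neg_iff in H; lra. }
  pose proof (gap_pos_of_region q Hxy Hyz); lra.
Qed.

Lemma gap_at_y_le0 : gap (re y) (im y) <= 0.
Proof.
  assert (Hy : 0 <= side x y y).
  { unfold side; rewrite dH_refl; pose proof (pow2_ge_0 (dH y x)); lra. }
  assert (0 <= bisector x y (re y) (im y)).
  { apply Rnot_lt_le; intro H; apply side_neg_iff in H; lra. }
  unfold gap, Rmin; destruct (Rle_dec _ _); lra.
Qed.

Lemma between_side_cases (p : H2) : 0 < side x y p \/ side y z p < 0.
Proof.
  destruct (Rlt_le_dec 0 (side x y p)) as [Hxy | Hxy]; [now left | right].
  destruct (Rlt_le_dec (side y z p) 0) as [Hyz | Hyz]; [exact Hyz | exfalso].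
  set (phi := fun t => gap ((1 - t) * re p + t * re y) ((1 - t) * im p + t * im y)).
  assert (Hphi : continuity phi)
    by (apply continuity_Rmin; [apply continuity_opp | ];
        apply bisector_continuous_segment).
  assert (Hphi0 : phi 0 = gap (re p) (im p))
    by (unfold phi; f_equal; ring).
  assert (Hphi1 : phi 1 = gap (re y) (im y))
    by (unfold phi; f_equal; ring).
  pose proof (gap_pos_of_region p Hxy Hyz); pose proof gap_at_y_le0.
  destruct (IVT_cor phi 0 1 Hphi ltac:(lra) ltac:(nra)) as [t [Ht Hzero]].
  destruct (H2_segment p y t Ht) as [w [Hre Him]].
  apply (gap_neq0 w); rewrite Hre, Him; exact Hzero.
Qed.

End Between.

Theorem mainTheorem5 (x y z : H2xH2) (k l : R) :
  betweenP x y z ->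
  (exists p : H2xH2, E k x y p /\ E l y z p) ->
  k * l > 0.
Proof.
  intros [Hb1 Hb2] [[p1 p2] [[Hk1 Hk2] [Hl1 Hl2]]]; unfold S in *; simpl in *.
  pose proof (between_side_cases _ _ _ Hb1 p1) as H1.
  pose proof (between_side_cases _ _ _ Hb2 p2) as H2.
  unfold side in *; destruct H1, H2; nra.
Qed.
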